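(* Assume in addition that $-K_{X_\Sigma}-\sum_{j=1}^cc_1(\mathcal L_j)$ is nef. Then the set $$W(\Sigma')=\bigcup_{\langle\underline a_{i_1},\dots,\underline a_{i_n}\rangle\in\Sigma(n)}\mathrm{Conv}(\underline 0,\underline a'_{i_1},\dots,\underline a'_{i_n},\underline e_{n+1},\dots,\underline e_{n+c})$$ is convex and equals $\mathrm{Conv}(\underline 0,\underline a'_1,\dots,\underline a'_{m+c})$.
   Context: $X_\Sigma$ is a smooth projective toric variety given by a complete smooth fan $\Sigma$ in $\mathbb R^n$ with primitive ray generators $\underline a_1,\dots,\underline a_m$; $\Sigma(n)$ is the set of $n$-dimensional cones. $\mathcal L_1,\dots,\mathcal L_c$ are nef line bundles; choose $d_{ji}\ge0$ with $\mathcal O(\sum_{i=1}^md_{ji}D_i)\cong\mathcal L_j$, where $D_i$ are the torus-invariant divisors. $\underline a'_i=(\underline a_i,d_{1i},\dots,d_{ci})\in\mathbb R^{n+c}$ for $i\le m$ and $\underline a'_{m+j}=\underline e_{n+j}$. $\Sigma'$ is the fan in $\mathbb R^{n+c}$ with cones $\langle\underline a'_{i_1},\dots,\underline a'_{i_k},\underline e_{n+j_1},\dots,\underline e_{n+j_l}\rangle$ for $\langle\underline a_{i_1},\dots,\underline a_{i_k}\rangle\in\Sigma$. *)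

From HB Require Import structures.
From mathcomp Require Import all_boot all_order all_algebra.
Set Implicit Arguments. Unset Strict Implicit. Unset Printing Implicit Defensive.
Import Order.TTheory GRing.Theory Num.Theory.
Local Open Scope ring_scope.

(* Data: ray generators a : 'I_m -> Z^n (as integer row vectors),
   maximal cones S : {set {set 'I_m}} (each cone given by the set of indices
   of its ray generators; Sigma is simplicial, so cones are determined by
   subsets of rays). *)

Definition vecR (R : realFieldType) (n : nat) (v : 'rV[int]_n) : 'rV[R]_n :=
  map_mx (fun z : int => z%:~R) v.

Definition cone_of (R : realFieldType) (n m : nat) (a : 'I_m -> 'rV[int]_n)
  (s : {set 'I_m}) (x : 'rV[R]_n) : Prop :=
  exists lam : 'I_m -> R, (forall i, 0 <= lam i) /\
    x = \sum_(i in s) lam i *: vecR R (a i).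

Definition unimodular_cone (n m : nat) (a : 'I_m -> 'rV[int]_n)
  (s : {set 'I_m}) : Prop :=
  #|s| = n /\
  (forall v : 'rV[int]_n, exists lam : 'I_m -> int, v = \sum_(i in s) lam i *: a i) /\
  (forall lam : 'I_m -> int, \sum_(i in s) lam i *: a i = 0 ->
      forall i, i \in s -> lam i = 0).

(* S is the set of n-dimensional cones Sigma(n) of a complete smooth fan Sigma
   (Sigma = all faces of the cones in S) with primitive ray generators a. *)
Definition complete_smooth_fan (R : realFieldType) (n m : nat)
  (a : 'I_m -> 'rV[int]_n) (S : {set {set 'I_m}}) : Prop :=
  [/\ injective a,
      (forall i, exists2 s, s \in S & i \in s),
      (forall s, s \in S -> unimodular_cone a s),
      (forall s t, s \in S -> t \in S -> forall x : 'rV[R]_n,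
          cone_of a s x -> cone_of a t x -> cone_of a (s :&: t) x)
    & (forall x : 'rV[R]_n, exists2 s, s \in S & cone_of a s x)].

Definition dotv (R : realFieldType) (n : nat) (u v : 'rV[R]_n) : R :=
  (u *m v^T) 0 0.

(* The torus-invariant divisor sum_i D i * D_i is nef: its support function
   (linear on each maximal cone sigma, with value D i at a_i) is convex, i.e.
   the linear function u_sigma with <u_sigma, a_i> = D i for i in sigma
   satisfies <u_sigma, a_j> <= D j for all j. *)
Definition nef_divisor (R : realFieldType) (n m : nat) (a : 'I_m -> 'rV[int]_n)
  (S : {set {set 'I_m}}) (D : 'I_m -> int) : Prop :=
  forall s, s \in S -> exists u : 'rV[R]_n,
    (forall i, i \in s -> dotv u (vecR R (a i)) = (D i)%:~R) /\
    (forall j, dotv u (vecR R (a j)) <= (D j)%:~R).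

Definition aprime (R : realFieldType) (n m c : nat) (a : 'I_m -> 'rV[int]_n)
  (d : 'I_c -> 'I_m -> nat) (k : 'I_(m + c)) : 'rV[R]_(n + c) :=
  match split k with
  | inl i => row_mx (vecR R (a i)) (\row_(j < c) ((d j i)%:R : R))
  | inr j => row_mx 0 (delta_mx 0 j)
  end.

Definition conv (R : realFieldType) (N : nat) (s : seq 'rV[R]_N) (x : 'rV[R]_N) : Prop :=
  exists w : seq R, [/\ size w = size s, (forall k, 0 <= w`_k),
     \sum_(k < size s) w`_k = 1 & x = \sum_(k < size s) w`_k *: s`_k].

Definition convex_set (R : realFieldType) (N : nat) (P : 'rV[R]_N -> Prop) : Prop :=
  forall x y (t : R), P x -> P y -> 0 <= t -> t <= 1 -> P ((1 - t) *: x + t *: y).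

Definition Wset (R : realFieldType) (n m c : nat) (a : 'I_m -> 'rV[int]_n)
  (d : 'I_c -> 'I_m -> nat) (S : {set {set 'I_m}}) (x : 'rV[R]_(n + c)) : Prop :=
  exists2 s, s \in S &
    conv (0 :: [seq aprime R a d (lshift c i) | i <- enum s]
            ++ [seq aprime R a d (rshift m j) | j <- enum 'I_c]) x.

From HB Require Import structures.
From mathcomp Require Import all_boot all_order all_algebra.
Import Order.TTheory GRing.Theory Num.Theory.
Local Open Scope ring_scope.
Set Implicit Arguments. Unset Strict Implicit. Unset Printing Implicit Defensive.

(* Write points of R^(n+c) as x = (y, z) with y in R^n and z in R^c, and let
   P_D = {u | <u, a_i> <= D_i for all i} be the polytope of a divisor D.
   The proof identifies both sets with the polyhedron H cut out by
     <u, y> - z_j <= 0           for every j and every u in P_{L_j},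
     <v, y> + sum_j z_j <= 1     for every v in P_{-K - sum_j L_j}.
   (1) H is an intersection of half-spaces, hence convex, and 0 and every a'_k
       lie in H; so every convex hull of such points, in particular W(Sigma')
       and Conv(0, a'_1, ..., a'_{m+c}), is contained in H.
   (2) Conversely let x = (y, z) be in H.  By completeness y = sum_{i in s}
       lam_i a_i, lam >= 0, for a maximal cone s, so x = sum_{i in s} lam_i a'_i
       + sum_j mu_j e_{n+j} with mu_j = z_j - sum_{i in s} lam_i d_{ji}.  Testing
       the inequalities of H against the vertices of P_{L_j} and of the twisted
       anticanonical polytope attached to s by nefness gives mu_j >= 0 and
       sum lam + sum mu <= 1, i.e. x lies in the simplex of s, and a fortiori
       in Conv(0, a'_1, ..., a'_{m+c}).
   Hence W(Sigma') = H = Conv(0, a'_1, ..., a'_{m+c}), and W(Sigma') is convex. *)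

Section Halfspaces.
Variables (R : realFieldType) (N : nat).
Implicit Types (w x y : 'rV[R]_N) (b t : R).

Lemma dotvDr w x y : dotv w (x + y) = dotv w x + dotv w y.
Proof. by rewrite /dotv linearD mulmxDr mxE. Qed.

Lemma dotvZr w t x : dotv w (t *: x) = t * dotv w x.
Proof. by rewrite /dotv linearZ /= -scalemxAr mxE. Qed.

Lemma dotv0r w : dotv w 0 = 0.
Proof. by rewrite /dotv trmx0 mulmx0 mxE. Qed.

Lemma dotv_sumr w (I : Type) (r : seq I) (P : pred I) (F : I -> 'rV[R]_N) :
  dotv w (\sum_(i <- r | P i) F i) = \sum_(i <- r | P i) dotv w (F i).
Proof. exact: (big_morph _ (dotvDr w) (dotv0r w)). Qed.

Lemma halfspace_convex w b : convex_set (fun x => dotv w x <= b).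
Proof.
move=> x y t hx hy t0 t1; rewrite dotvDr !dotvZr.
have -> : b = (1 - t) * b + t * b by rewrite mulrBl mul1r subrK.
by rewrite lerD // ler_wpM2l // subr_ge0.
Qed.

Lemma conv_halfspace w b (L : seq 'rV[R]_N) x :
  (forall p, p \in L -> dotv w p <= b) -> conv L x -> dotv w x <= b.
Proof.
move=> hL [wt [_ wt0 wt1 ->]]; rewrite dotv_sumr.
apply: (@le_trans _ _ (\sum_(k < size L) wt`_k * b)); last by rewrite -mulr_suml wt1 mul1r.
by apply: ler_sum => k _; rewrite dotvZr ler_wpM2l // hL // mem_nth.
Qed.

(* A nonnegative combination of total mass at most 1 of the f z lies in the
   hull of 0 and the f z; the missing mass is put on 0. *)
Lemma conv_of_weights (T : Type) (f : T -> 'rV[R]_N) (s : seq T) (wt : T -> R) x :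
  (forall z, 0 <= wt z) -> \sum_(z <- s) wt z <= 1 ->
  x = \sum_(z <- s) wt z *: f z -> conv (0 :: map f s) x.
Proof.
move=> wt0 wt1 ->.
exists ((1 - \sum_(z <- s) wt z) :: map wt s); split => /=.
- by rewrite !size_map.
- case=> [|k] /=; first by rewrite subr_ge0.
  case: (ltnP k (size s)) => hk; last by rewrite nth_default ?size_map.
  by case: s {wt1} hk => // t0 s' hk; rewrite (nth_map t0).
- rewrite big_ord_recl /= size_map.
  have -> : \sum_(i < size s) (map wt s)`_(0 + i) = \sum_(z <- s) wt z.
    by rewrite -(big_map wt xpredT id) (big_nth 0) big_mkord size_map.
  by rewrite subrK.
- rewrite big_ord_recl /= scaler0 add0r size_map.
  case: s {wt1} => [|t0 s]; first by rewrite big_nil big_ord0.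
  rewrite (big_nth t0) big_mkord; apply: eq_bigr => i _.
  by rewrite add0n !(nth_map t0).
Qed.

End Halfspaces.

Section BlockPairing.
Variables (R : realFieldType) (N1 N2 : nat).

Lemma dotv_row_mx (u1 : 'rV[R]_N1) (u2 : 'rV[R]_N2) (x : 'rV[R]_(N1 + N2)) :
  dotv (row_mx u1 u2) x = dotv u1 (lsubmx x) + dotv u2 (rsubmx x).
Proof. by rewrite -[in LHS](hsubmxK x) /dotv tr_row_mx mul_row_col mxE. Qed.

Lemma dotvNl (u x : 'rV[R]_N2) : dotv (- u) x = - dotv u x.
Proof. by rewrite /dotv mulNmx mxE. Qed.

Lemma dotv_delta (j : 'I_N2) (x : 'rV[R]_N2) : dotv (delta_mx 0 j) x = x 0 j.
Proof.
rewrite /dotv mxE (bigD1 j) //= !mxE !eqxx mul1r big1 ?addr0 // => k /negbTE hk.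
by rewrite mxE hk andbF mul0r.
Qed.

Lemma dotv_const1 (x : 'rV[R]_N2) : dotv (const_mx 1) x = \sum_j x 0 j.
Proof. by rewrite /dotv mxE; apply: eq_bigr => j _; rewrite !mxE mul1r. Qed.

End BlockPairing.

Lemma sum_row_mx (R : nmodType) (N1 N2 : nat) (I : Type) (r : seq I) (P : pred I)
    (A : I -> 'rV[R]_N1) (B : I -> 'rV[R]_N2) :
  \sum_(i <- r | P i) row_mx (A i) (B i) =
    row_mx (\sum_(i <- r | P i) A i) (\sum_(i <- r | P i) B i).
Proof.
elim/big_rec3: _ => [|i x y z _ ->]; first by rewrite row_mx0.
by rewrite add_row_mx.
Qed.

Section LiftedPolyhedron.
Variables (R : realFieldType) (n m c : nat).
Variables (a : 'I_m -> 'rV[int]_n) (d : 'I_c -> 'I_m -> nat).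

Local Notation a' := (aprime R a d).

Lemma aprime_lshift i :
  a' (lshift c i) = row_mx (vecR R (a i)) (\row_j (d j i)%:R).
Proof. by rewrite /aprime (unsplitK (inl i)). Qed.

Lemma aprime_rshift j : a' (rshift m j) = row_mx 0 (delta_mx 0 j).
Proof. by rewrite /aprime (unsplitK (inr j)). Qed.

Lemma lsubmx_aprime_lshift i : lsubmx (a' (lshift c i)) = vecR R (a i).
Proof. by rewrite /aprime (unsplitK (inl i)) row_mxKl. Qed.

Lemma rsubmx_aprime_lshift i j : rsubmx (a' (lshift c i)) 0 j = (d j i)%:R.
Proof. by rewrite /aprime (unsplitK (inl i)) row_mxKr mxE. Qed.

Lemma lsubmx_aprime_rshift j : lsubmx (a' (rshift m j)) = 0.
Proof. by rewrite /aprime (unsplitK (inr j)) row_mxKl. Qed.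

Lemma rsubmx_aprime_rshift j k : rsubmx (a' (rshift m j)) 0 k = (k == j)%:R.
Proof. by rewrite /aprime (unsplitK (inr j)) row_mxKr mxE. Qed.

Definition divisor_polytope (D : 'I_m -> R) (u : 'rV[R]_n) : Prop :=
  forall i, dotv u (vecR R (a i)) <= D i.

(* The polytopes of L_j and of -K - sum_j L_j. *)
Definition Lpolytope (j : 'I_c) := divisor_polytope (fun i => (d j i)%:R).

Definition twist_polytope := divisor_polytope (fun i => 1 - \sum_j ((d j i)%:R : R)).

Definition lifted_polyhedron (x : 'rV[R]_(n + c)) : Prop :=
  (forall j u, Lpolytope j u -> dotv (row_mx u (- delta_mx 0 j)) x <= 0) /\
  (forall v, twist_polytope v -> dotv (row_mx v (const_mx 1)) x <= 1).

Lemma dotv_fiber_normal u j (x : 'rV[R]_(n + c)) :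
  dotv (row_mx u (- delta_mx 0 j)) x = dotv u (lsubmx x) - rsubmx x 0 j.
Proof. by rewrite dotv_row_mx dotvNl dotv_delta. Qed.

Lemma dotv_base_normal v (x : 'rV[R]_(n + c)) :
  dotv (row_mx v (const_mx 1)) x = dotv v (lsubmx x) + \sum_j rsubmx x 0 j.
Proof. by rewrite dotv_row_mx dotv_const1. Qed.

Lemma lifted_polyhedron_convex : convex_set lifted_polyhedron.
Proof.
move=> x y t [hx1 hx2] [hy1 hy2] t0 t1; split.
  by move=> j u hu; apply: halfspace_convex; [apply: hx1|apply: hy1|..].
by move=> v hv; apply: halfspace_convex; [apply: hx2|apply: hy2|..].
Qed.

Lemma lifted_polyhedron0 : lifted_polyhedron 0.
Proof. by split=> *; rewrite dotv0r. Qed.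

Lemma lifted_polyhedron_aprime k : lifted_polyhedron (a' k).
Proof.
split=> [j u hu | v hv].
  rewrite dotv_fiber_normal; case: (split_ordP k) => i ->.
    by rewrite lsubmx_aprime_lshift rsubmx_aprime_lshift subr_le0.
  by rewrite lsubmx_aprime_rshift rsubmx_aprime_rshift dotv0r sub0r oppr_le0 ler0n.
rewrite dotv_base_normal; case: (split_ordP k) => i ->.
  rewrite lsubmx_aprime_lshift -lerBrDr.
  by under eq_bigr do rewrite rsubmx_aprime_lshift.
rewrite lsubmx_aprime_rshift dotv0r add0r (bigD1 i) //= rsubmx_aprime_rshift eqxx.
by rewrite big1 ?addr0 // => j /negbTE hj; rewrite rsubmx_aprime_rshift hj.
Qed.

Lemma conv_sub_lifted_polyhedron (l : seq 'I_(m + c)) x :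
  conv (0 :: map a' l) x -> lifted_polyhedron x.
Proof.
have vert p : p \in 0 :: map a' l -> lifted_polyhedron p.
  by rewrite inE => /orP[/eqP -> | /mapP[k _ ->]];
    [exact: lifted_polyhedron0 | exact: lifted_polyhedron_aprime].
move=> hx; split=> [j u hu | v hv]; apply: conv_halfspace hx => p /vert [h1 h2].
  exact: h1.
exact: h2.
Qed.

End LiftedPolyhedron.

Section ConeDecomposition.
Variables (R : realFieldType) (n m c : nat).
Variables (a : 'I_m -> 'rV[int]_n) (d : 'I_c -> 'I_m -> nat).
Variables (s : {set 'I_m}) (lam : 'I_m -> R) (x : 'rV[R]_(n + c)).
Hypothesis base_in_cone : lsubmx x = \sum_(i in s) lam i *: vecR R (a i).

Local Notation a' := (aprime R a d).

Definition fiber_excess (j : 'I_c) : R :=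
  rsubmx x 0 j - \sum_(i in s) lam i * (d j i)%:R.

Lemma lift_decomposition :
  x = \sum_(i in s) lam i *: a' (lshift c i) + \sum_j fiber_excess j *: a' (rshift m j).
Proof.
under eq_bigr do rewrite aprime_lshift scale_row_mx.
under [X in _ + X]eq_bigr do rewrite aprime_rshift scale_row_mx scaler0.
rewrite !sum_row_mx add_row_mx big1_eq addr0 -base_in_cone -[LHS]hsubmxK.
congr row_mx; apply/rowP => j; rewrite !mxE !summxE (bigD1 j) //= !mxE /= eqxx mulr1.
rewrite [X in _ + (_ + X)]big1 => [|k /negbTE hk]; last by rewrite !mxE eq_sym hk andbF mulr0.
rewrite addr0 /fiber_excess mxE (eq_bigr (fun i => lam i * (d j i)%:R)) => [|i _].
  by rewrite subrKC.
by rewrite !mxE.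
Qed.

Lemma dotv_base u : dotv u (lsubmx x) = \sum_(i in s) lam i * dotv u (vecR R (a i)).
Proof. by rewrite base_in_cone dotv_sumr; apply: eq_bigr => i _; rewrite dotvZr. Qed.

(* Nefness of L_j yields u in P_{L_j} with <u, a_i> = d_{ji} on s; the
   corresponding inequality of H says mu_j >= 0. *)
Lemma fiber_excess_ge0 (S : {set {set 'I_m}}) j : s \in S ->
  nef_divisor R a S (fun i => (d j i)%:Z) -> lifted_polyhedron a d x ->
  0 <= fiber_excess j.
Proof.
move=> hs /(_ s hs) [u [u_eq u_le]] [fiber_le _].
have := fiber_le j u u_le; rewrite dotv_fiber_normal dotv_base subr_le0 subr_ge0.
by under eq_bigr => i hi do rewrite u_eq //.
Qed.

(* Nefness of -K - sum_j L_j yields v in its polytope, sharp on s; the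
   corresponding inequality of H is exactly sum lam + sum mu <= 1. *)
Lemma cone_weights_le1 (S : {set {set 'I_m}}) : s \in S ->
  nef_divisor R a S (fun i => 1 - \sum_(j < c) (d j i)%:Z) -> lifted_polyhedron a d x ->
  \sum_(i in s) lam i + \sum_j fiber_excess j <= 1.
Proof.
have intr_twist i : ((1 - \sum_j (d j i)%:Z)%:~R : R) = 1 - \sum_j (d j i)%:R.
  by rewrite rmorphB rmorph1 rmorph_sum.
move=> hs /(_ s hs) [v [v_eq v_le]] [_ base_le].
have hv : twist_polytope a d v by move=> i; rewrite -intr_twist.
suff -> : \sum_(i in s) lam i + \sum_j fiber_excess j =
          dotv (row_mx v (const_mx 1)) x by exact: base_le.
rewrite dotv_base_normal dotv_base /fiber_excess sumrB.
under [in RHS]eq_bigr => i hi do rewrite v_eq // intr_twist mulrBr mulr1 big_distrr.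
by rewrite sumrB exchange_big /= addrAC addrA.
Qed.

End ConeDecomposition.

Section LiftedWeights.
Variables (R : realFieldType) (m c : nat).
Variables (s : {set 'I_m}) (lam : 'I_m -> R) (mu : 'I_c -> R).

Definition lift_weight (k : 'I_(m + c)) : R :=
  match split k with inl i => if i \in s then lam i else 0 | inr j => mu j end.

Definition cone_indices : seq 'I_(m + c) :=
  map (lshift c) (enum s) ++ map (@rshift m c) (enum 'I_c).

Lemma lift_weight_ge0 :
  (forall i, 0 <= lam i) -> (forall j, 0 <= mu j) -> forall k, 0 <= lift_weight k.
Proof. by move=> lam0 mu0 k; rewrite /lift_weight; case: (split k) => // i; case: ifP. Qed.

Lemma sum_lift_weight_cone (V : zmodType) (g : R -> 'I_(m + c) -> V) :
  \sum_(k <- cone_indices) g (lift_weight k) k =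
    \sum_(i in s) g (lam i) (lshift c i) + \sum_j g (mu j) (rshift m j).
Proof.
rewrite big_cat !big_map !big_enum /= /lift_weight.
under eq_bigr => i hi do rewrite (unsplitK (inl i)) /= hi.
by under [X in _ + X]eq_bigr do rewrite (unsplitK (inr _)).
Qed.

Lemma sum_lift_weight_full (V : zmodType) (g : R -> 'I_(m + c) -> V) :
  (forall k, g 0 k = 0) ->
  \sum_(k <- enum 'I_(m + c)) g (lift_weight k) k =
    \sum_(i in s) g (lam i) (lshift c i) + \sum_j g (mu j) (rshift m j).
Proof.
move=> g0; rewrite big_enum /= big_split_ord [in RHS]big_mkcond /= /lift_weight.
congr (_ + _); apply: eq_bigr => i _; first by rewrite (unsplitK (inl i)); case: ifP.
by rewrite (unsplitK (inr i)).
Qed.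

End LiftedWeights.

Arguments sum_lift_weight_full {R m c} s lam mu {V} g.

Section WsetDescription.
Variables (R : realFieldType) (n m c : nat).
Variables (a : 'I_m -> 'rV[int]_n) (S : {set {set 'I_m}}) (d : 'I_c -> 'I_m -> nat).

Local Notation a' := (aprime R a d).

Lemma Wset_cone_indices x :
  Wset a d S x <-> exists2 s, s \in S & conv (0 :: map a' (cone_indices c s)) x.
Proof.
have hull_list (s : {set 'I_m}) :
    [seq a' (lshift c i) | i <- enum s] ++ [seq a' (rshift m j) | j <- enum 'I_c] =
    map a' (cone_indices c s) by rewrite map_cat -!map_comp.
by split=> -[s hs hx]; exists s; rewrite ?hull_list // -hull_list.
Qed.

Lemma Wset_sub_lifted_polyhedron x : Wset a d S x -> lifted_polyhedron (R:=R) a d x.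
Proof. by case/Wset_cone_indices=> s _; apply: conv_sub_lifted_polyhedron. Qed.

Hypothesis fan : complete_smooth_fan R a S.
Hypothesis nef_L : forall j : 'I_c, nef_divisor R a S (fun i => (d j i)%:Z).
Hypothesis nef_twist : nef_divisor R a S (fun i => 1 - \sum_(j < c) (d j i)%:Z).

Lemma lifted_polyhedron_sub_hulls x : lifted_polyhedron (R:=R) a d x ->
  exists2 s, s \in S & conv (0 :: map a' (cone_indices c s)) x /\
                       conv (0 :: map a' (enum 'I_(m + c))) x.
Proof.
move=> hx; have [_ _ _ _ complete] := fan.
have [s hs [lam [lam0 hbase]]] := complete (lsubmx x).
pose mu := fiber_excess d s lam x.
have mu0 j : 0 <= mu j by exact: (fiber_excess_ge0 hbase hs (nef_L j) hx).
have sum_le1 := cone_weights_le1 hbase hs nef_twist hx.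
have w0 := lift_weight_ge0 s lam0 mu0.
have hdec := lift_decomposition d hbase; exists s => //; split.
  apply: (conv_of_weights w0).
    by rewrite (sum_lift_weight_cone _ _ _ (fun r _ => r)); exact: sum_le1.
  by rewrite (sum_lift_weight_cone _ _ _ (fun r k => r *: a' k)); exact: hdec.
apply: (conv_of_weights w0).
  by rewrite (sum_lift_weight_full _ _ _ (fun r _ => r)) //; exact: sum_le1.
rewrite (sum_lift_weight_full _ _ _ (fun r k => r *: a' k)) => [|k]; first exact: hdec.
exact: scale0r.
Qed.

End WsetDescription.

Unset Implicit Arguments.

Theorem lemma5p3 (R : realFieldType) (n m c : nat)
  (a : 'I_m -> 'rV[int]_n) (S : {set {set 'I_m}}) (d : 'I_c -> 'I_m -> nat) :
  complete_smooth_fan R a S ->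
  (forall j : 'I_c, nef_divisor R a S (fun i => (d j i)%:Z)) ->
  nef_divisor R a S (fun i => 1 - \sum_(j < c) (d j i)%:Z) ->
  convex_set (Wset (R:=R) a d S) /\
  (forall x, Wset (R:=R) a d S x <->
     conv (0 :: [seq aprime R a d k | k <- enum 'I_(m + c)]) x).
Proof.
move=> fan nef_L nef_twist.
have Wset_lifted x : Wset a d S x <-> lifted_polyhedron (R:=R) a d x.
  split; first exact: Wset_sub_lifted_polyhedron.
  by case/(lifted_polyhedron_sub_hulls fan nef_L nef_twist)=> s hs [hW _];
     apply/Wset_cone_indices; exists s.
split.
  move=> x y t /Wset_lifted hx /Wset_lifted hy t0 t1.
  exact/Wset_lifted/lifted_polyhedron_convex.
move=> x; split=> [/Wset_lifted | /conv_sub_lifted_polyhedron /Wset_lifted //].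
by case/(lifted_polyhedron_sub_hulls fan nef_L nef_twist)=> s _ [].
Qed.
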